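(* Let $G$ be a fully connected (complete) graph on $n$ vertices $\{1,\dots,n\}$, and let $t\mapsto\rho_t=(\rho_1(t),\dots,\rho_n(t))$ be a differentiable, $T$-periodic curve in $\mathcal P_o(G)=\{\rho\in\mathbb R^n:\sum_i\rho_i=1,\ \rho_i>0\ \forall i\}$. Then there exists a family of transition rate matrices $Q(t)$ (i.e. $n\times n$ matrices with nonnegative off-diagonal entries and each row summing to zero) such that $\rho_t$ solves the master equation $\dot\rho_t=\rho_tQ(t)$ (row vector times matrix) for all $t$. *)

From mathcomp Require Import all_boot all_algebra.
From mathcomp Require Import all_classical all_reals all_analysis.
Import GRing.Theory Num.Theory.
Local Open Scope ring_scope.

Definition in_open_simplex {R : realType} {n : nat} (rho : 'rV[R]_n) : Prop :=
  \sum_(i < n) rho 0 i = 1 /\ forall i : 'I_n, 0 < rho 0 i.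

(* Transition rate matrix on the complete graph K_n: nonnegative off-diagonal
   entries (every pair i <> j is an edge, so no further sparsity constraint)
   and every row sums to zero. *)
Definition rate_matrix {R : realType} {n : nat} (Q : 'M[R]_n) : Prop :=
  (forall i j : 'I_n, i != j -> 0 <= Q i j) /\
  (forall i : 'I_n, \sum_(j < n) Q i j = 0).

From mathcomp Require Import all_boot all_algebra.
From mathcomp Require Import all_classical all_reals all_analysis.
From mathcomp Require Import lra.
Import order.Order.TTheory GRing.Theory Num.Theory.
Local Open Scope ring_scope.

(* The curve stays in the simplex, so its velocity v has total mass zero, and
   for any positive probability vector r and zero-mass v the matrix
   Q_ij = v_j + c (r_j - [i = j]) satisfies r Q = v (r sums to 1) and has zero
   row sums; choosing c >= |v_j| / r_j makes its off-diagonal entries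
   nonnegative. *)

Definition drift_bound {R : realType} {n : nat} (r v : 'rV[R]_n) : R :=
  \sum_(j < n) `|v 0 j| / r 0 j.

Definition drift_rate_matrix {R : realType} {n : nat} (r v : 'rV[R]_n)
    : 'M[R]_n :=
  \matrix_(i, j) (v 0 j + drift_bound r v * r 0 j - (i == j)%:R * drift_bound r v).

Section DriftRateMatrix.
Variables (R : realType) (n : nat) (r v : 'rV[R]_n).
Hypothesis r_simplex : in_open_simplex r.

Lemma ler_norm_drift_bound (j : 'I_n) : `|v 0 j| <= drift_bound r v * r 0 j.
Proof.
have [_ r_gt0] := r_simplex.
rewrite -ler_pdivrMr // /drift_bound (bigD1 j) //= lerDl.
by apply: sumr_ge0 => k _; rewrite divr_ge0 // ltW.
Qed.

Lemma mul_drift_rate_matrix : r *m drift_rate_matrix r v = v.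
Proof.
have [r_sum1 _] := r_simplex.
apply/rowP => j; rewrite !mxE.
under eq_bigr do rewrite mxE mulrBr mulrDr.
rewrite sumrB big_split /= -!mulr_suml r_sum1 !mul1r.
rewrite (bigD1 j) //= eqxx mul1r big1 ?addr0; first by rewrite mulrC addrK.
by move=> i /negbTE ->; rewrite mul0r mulr0.
Qed.

Lemma drift_rate_matrixP :
  \sum_(j < n) v 0 j = 0 -> rate_matrix (drift_rate_matrix r v).
Proof.
have [r_sum1 _] := r_simplex.
move=> v_sum0; split=> [i j /negbTE neq_ij | i].
  rewrite mxE neq_ij mul0r subr0.
  have /ler_normlP [] := ler_norm_drift_bound j; lra.
under eq_bigr do rewrite mxE.
rewrite sumrB big_split /= v_sum0 add0r -mulr_sumr r_sum1 mulr1.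
rewrite (bigD1 i) //= eqxx mul1r big1 ?addr0 ?subrr //.
by move=> j /negbTE; rewrite eq_sym => ->; rewrite mul0r.
Qed.

End DriftRateMatrix.

Lemma sum_derive_row_const (R : realType) (n : nat) (rho : R -> 'rV[R]_n)
    (c t : R) :
  derivable rho t 1 -> (forall s, \sum_(i < n) rho s 0 i = c) ->
  \sum_(i < n) ('D_1 rho t) 0 i = 0.
Proof.
move=> rho_der rho_sum.
have rhoi_der i : derivable (fun s => rho s 0 i) t 1.
  by move/derivable_mxP: rho_der; apply.
rewrite derive_mx //.
under eq_bigr do rewrite mxE.
rewrite -derive_sum //.
have -> : \sum_(i < n) (fun s => rho s 0 i) = cst c.
  by apply/funext => s; rewrite fct_sumE.
exact: derive_cst.
Qed.

Theorem mainTheorem4 (R : realType) (n : nat) (T : R) (rho : R -> 'rV[R]_n) :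
  0 < T ->
  (forall t : R, derivable rho t 1) ->
  (forall t : R, rho (t + T) = rho t) ->
  (forall t : R, in_open_simplex (rho t)) ->
  exists Q : R -> 'M[R]_n,
    (forall t : R, rate_matrix (Q t)) /\
    (forall t : R, 'D_1 rho t = rho t *m Q t).
Proof.
move=> _ rho_der _ rho_simplex.
have velocity_sum0 t : \sum_(i < n) ('D_1 rho t) 0 i = 0.
  by apply: (@sum_derive_row_const _ _ _ 1) => // s; case: (rho_simplex s).
exists (fun t => drift_rate_matrix (rho t) ('D_1 rho t)); split=> t.
- exact: drift_rate_matrixP.
- by rewrite mul_drift_rate_matrix.
Qed.
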